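(* Let $G=(V,E)$ be a simple undirected graph with $V=[n]$ and let $k\ge 1$ be an integer. Then $\vartheta'(K_k\,\Box\, G)=\theta^2_k(G)\ge\alpha_k(G)$.
   Context: $\alpha_k(G)$ is the maximum number of vertices of an induced subgraph of $G$ that is $k$-colorable (adjacent vertices receive different colors). $K_k$ is the complete graph on vertex set $[k]$. The Cartesian product $K_k\Box G$ has vertex set $[k]\times V$, with $(u,i)$ and $(v,j)$ adjacent iff ($u=v$ and $\{i,j\}\in E$) or ($i=j$ and $u\ne v$). For a graph $H$ on vertex set $W$, the Schrijver number is $\vartheta'(H)=\max\{\langle J,Y\rangle: Y\in\mathbb S^{|W|},\ Y_{ab}=0 \text{ for all edges } \{a,b\} \text{ of } H,\ \mathrm{trace}(Y)=1,\ Y\succeq0,\ Y\ge0\}$, where $J$ is the all-ones matrix. $\theta^2_k(G)$ is the optimal value of: maximize $\sum_{r\in[k]}\sum_{i\in[n]}Y^{rr}_{ii}$ over $Y\in\mathbb S^{nk}$ (viewed as a $k\times k$ array of $n\times n$ blocks $Y^{rl}$) subject to $Y^{rr}_{ij}=0$ for $\{i,j\}\in E$, $r\in[k]$; $Y^{rl}_{ii}=0$ for $i\in[n]$, $r,l\in[k]$, $r\ne l$; $Y\ge0$ entrywise; $\begin{bmatrix}1&\mathrm{diag}(Y)^{\top}\\ \mathrm{diag}(Y)&Y\end{bmatrix}\succeq 0$. *)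

From HB Require Import structures.
From mathcomp Require Import all_boot all_order all_algebra.
From mathcomp Require Import boolp classical_sets reals.
Set Implicit Arguments. Unset Strict Implicit. Unset Printing Implicit Defensive.
Import Order.TTheory GRing.Theory Num.Theory.
Local Open Scope ring_scope.
Local Open Scope classical_set_scope.

Definition simple_graph (T : finType) (e : rel T) : Prop :=
  (forall x y, e x y = e y x) /\ (forall x, ~~ e x x).

Definition symm {R : realType} {T : finType} (Y : T -> T -> R) : Prop :=
  forall a b, Y a b = Y b a.

Definition psd {R : realType} {T : finType} (Y : T -> T -> R) : Prop :=
  symm Y /\ forall x : T -> R, 0 <= \sum_(a : T) \sum_(b : T) x a * Y a b * x b.

Definition nonneg {R : realType} {T : finType} (Y : T -> T -> R) : Prop :=
  forall a b, 0 <= Y a b.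

Definition trace {R : realType} {T : finType} (Y : T -> T -> R) : R :=
  \sum_(a : T) Y a a.

Definition sumJ {R : realType} {T : finType} (Y : T -> T -> R) : R :=
  \sum_(a : T) \sum_(b : T) Y a b.

(* Schrijver number theta'(H) of a graph H = (T, h), as the supremum of the
   objective values of the feasible set (the maximum, which is attained). *)
Definition schrijver {R : realType} {T : finType} (h : rel T) : R :=
  sup [set v : R | exists Y : T -> T -> R,
        symm Y /\ (forall a b, h a b -> Y a b = 0) /\ trace Y = 1 /\
        psd Y /\ nonneg Y /\ v = sumJ Y].

Definition cart_Kk (k n : nat) (e : rel 'I_n) : rel ('I_k * 'I_n) :=
  fun p q => ((p.1 == q.1) && e p.2 q.2) || ((p.2 == q.2) && (p.1 != q.1)).

(* bordered matrix [1 diag(Y)^T ; diag(Y) Y] indexed by option T *)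
Definition border {R : realType} {T : finType} (Y : T -> T -> R) :
    option T -> option T -> R :=
  fun a b => match a, b with
             | None, None => 1
             | None, Some b => Y b b
             | Some a, None => Y a a
             | Some a, Some b => Y a b
             end.

Definition theta2 {R : realType} (k n : nat) (e : rel 'I_n) : R :=
  sup [set v : R | exists Y : 'I_k * 'I_n -> 'I_k * 'I_n -> R,
        symm Y /\
        (forall (r : 'I_k) (i j : 'I_n), e i j -> Y (r, i) (r, j) = 0) /\
        (forall (i : 'I_n) (r l : 'I_k), r != l -> Y (r, i) (l, i) = 0) /\
        nonneg Y /\ psd (border Y) /\
        v = \sum_(r : 'I_k) \sum_(i : 'I_n) Y (r, i) (r, i)].

Definition k_colorable_set (k n : nat) (e : rel 'I_n) (S : {set 'I_n}) : Prop :=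
  exists c : 'I_n -> 'I_k,
    forall i j, i \in S -> j \in S -> e i j -> c i != c j.

Definition alpha_k (k n : nat) (e : rel 'I_n) : nat :=
  \max_(S : {set 'I_n} | `[< k_colorable_set k e S >]) #|S|.

From HB Require Import structures.
From mathcomp Require Import all_boot all_order all_algebra.
From mathcomp Require Import boolp classical_sets reals.
From mathcomp Require Import ring lra.
Import Order.TTheory GRing.Theory Num.Theory.
Local Open Scope ring_scope.
Local Open Scope classical_set_scope.

(* A Schrijver-feasible Y of value v = <J, Y> yields the theta^2_k-feasible
   X = D Y D / v with D = diag(s_a / Y_aa), s the row sums of Y: the bordered
   matrix of X is a diagonal rescaling of the Gram matrix of Y against the
   all-ones vector and the unit vectors, and Cauchy-Schwarz, s_a^2 <= Y_aa v,
   gives tr X >= v.  Conversely, if X is theta^2_k-feasible with t = tr X > 0,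
   then X / t is Schrijver-feasible, and testing the bordered matrix against
   (-t, 1, ..., 1) gives <J, X> >= t^2, i.e. a value <J, X> / t >= t.  Both maps
   keep zero entries zero, and the edges of K_k [] G are exactly the entries
   forced to vanish in theta^2_k.  Finally a k-colouring c of S gives the
   feasible rank-one matrix x x^T, x_(r,i) = [i in S and c i = r], of value |S|. *)

Lemma sum_option (V : nmodType) (T : finType) (F : option T -> V) :
  \sum_(o : option T) F o = F None + \sum_(a : T) F (Some a).
Proof.
rewrite (bigD1 None) //=; congr (_ + _).
rewrite (reindex_omap Some id) /=; last by case.
by apply: eq_bigl => a; rewrite eqxx.
Qed.
Arguments sum_option {V T}.

Section RealFacts.
Context {R : realFieldType}.
Implicit Types a b c s v y : R.

Lemma quadratic_ge0_discr a b c : 0 <= c ->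
  (forall t, 0 <= a + 2 * t * b + t ^+ 2 * c) -> b ^+ 2 <= a * c.
Proof.
move=> c_ge0 q_ge0; have [c0|c_neq0] := eqVneq c 0.
  have [b0|b_neq0] := eqVneq b 0; first by rewrite b0 c0; lra.
  have := q_ge0 (- (a + 1) / (2 * b)); rewrite c0.
  have -> : a + 2 * (- (a + 1) / (2 * b)) * b + (- (a + 1) / (2 * b)) ^+ 2 * 0 = -1.
    by field.
  lra.
have c_gt0 : 0 < c by rewrite lt_def c_neq0.
have := q_ge0 (- b / c).
have -> : a + 2 * (- b / c) * b + (- b / c) ^+ 2 * c = (a * c - b ^+ 2) / c by field.
by rewrite pmulr_lge0 ?invr_gt0 // subr_ge0.
Qed.

Lemma sqr_divr_mul s y : (s / y) ^+ 2 * y = s ^+ 2 / y.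
Proof. by have [->|y_neq0] := eqVneq y 0; [rewrite invr0 !mulr0 | field]. Qed.

(* At y = 0 the hypothesis forces s = 0, and the right-hand side is s^2 / 0 = 0. *)
Lemma tangent_le_sqr_div s y v : 0 <= y -> s ^+ 2 <= y * v ->
  2 * v * s - v ^+ 2 * y <= s ^+ 2 / y.
Proof.
move=> y_ge0 s2_le; have [y0|y_neq0] := eqVneq y 0.
  move: s2_le; rewrite y0 mul0r invr0 mulr0 => s2_le0.
  have /eqP : s ^+ 2 = 0 by apply: le_anti; rewrite s2_le0 sqr_ge0.
  by rewrite sqrf_eq0 => /eqP ->; lra.
have y_gt0 : 0 < y by rewrite lt_def y_neq0.
rewrite -subr_ge0.
have -> : s ^+ 2 / y - (2 * v * s - v ^+ 2 * y) = (s - v * y) ^+ 2 / y by field.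
by rewrite divr_ge0 ?sqr_ge0 ?ltW.
Qed.

End RealFacts.

Section QuadraticForm.
Context {R : realType} {T : finType}.
Implicit Types (Y : T -> T -> R) (x y z : T -> R).

Definition qform Y x y : R := \sum_a \sum_b x a * Y a b * y b.

Definition unit_vec (a : T) : T -> R := fun c => (c == a)%:R.

Lemma psdE Y : psd Y <-> symm Y /\ forall x, 0 <= qform Y x x.
Proof. by []. Qed.

Lemma qformDl Y x z w (t : R) :
  qform Y (fun a => x a + t * z a) w = qform Y x w + t * qform Y z w.
Proof.
rewrite /qform mulr_sumr -big_split; apply: eq_bigr => a _.
rewrite mulr_sumr -big_split; apply: eq_bigr => b _ /=; ring.
Qed.

Lemma qformDr Y x z w (t : R) :
  qform Y w (fun a => x a + t * z a) = qform Y w x + t * qform Y w z.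
Proof.
rewrite /qform mulr_sumr -big_split; apply: eq_bigr => a _.
rewrite mulr_sumr -big_split; apply: eq_bigr => b _ /=; ring.
Qed.

Lemma qformC Y x y : symm Y -> qform Y x y = qform Y y x.
Proof.
move=> Ysym; rewrite /qform exchange_big; apply: eq_bigr => a _.
by apply: eq_bigr => b _; rewrite Ysym; ring.
Qed.

Lemma qform_CauchySchwarz Y x y :
  psd Y -> qform Y x y ^+ 2 <= qform Y x x * qform Y y y.
Proof.
move=> /psdE [Ysym Ypsd]; apply: quadratic_ge0_discr; first exact: Ypsd.
move=> t; set z := fun a => x a + t * y a.
have := Ypsd z; rewrite {1}/z qformDl (qformC _ x z Ysym) (qformC _ y z Ysym).
by rewrite /z !qformDl (qformC _ y x Ysym); congr (0 <= _); ring.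
Qed.

Lemma sum_unit_vecl a (F : T -> R) : \sum_c unit_vec a c * F c = F a.
Proof.
rewrite (bigD1 a) //= big1 => [|c ca]; last by rewrite /unit_vec (negbTE ca) mul0r.
by rewrite /unit_vec eqxx mul1r addr0.
Qed.

Lemma qform_unit_vecl Y a y : qform Y (unit_vec a) y = \sum_b Y a b * y b.
Proof.
rewrite /qform -(sum_unit_vecl a (fun c => \sum_b Y c b * y b)).
by apply: eq_bigr => c _; rewrite mulr_sumr; apply: eq_bigr => b _; rewrite mulrA.
Qed.

Lemma qform_unit_vec Y a b : qform Y (unit_vec a) (unit_vec b) = Y a b.
Proof.
rewrite qform_unit_vecl -[RHS](sum_unit_vecl b (Y a)).
by apply: eq_bigr => c _; rewrite mulrC.
Qed.

Lemma qform_unit_vec1 Y a : qform Y (unit_vec a) (fun=> 1) = \sum_b Y a b.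
Proof. by rewrite qform_unit_vecl; apply: eq_bigr => b _; rewrite mulr1. Qed.

Lemma qform11 Y : qform Y (fun=> 1) (fun=> 1) = sumJ Y.
Proof. by apply: eq_bigr => a _; apply: eq_bigr => b _; rewrite mulr1 mul1r. Qed.

Lemma psd_entry_sqr Y a b : psd Y -> Y a b ^+ 2 <= Y a a * Y b b.
Proof.
by move=> /(qform_CauchySchwarz _ (unit_vec a) (unit_vec b)); rewrite !qform_unit_vec.
Qed.

Lemma psd_row_sum_sqr Y a : psd Y -> (\sum_b Y a b) ^+ 2 <= Y a a * sumJ Y.
Proof.
move=> /(qform_CauchySchwarz _ (unit_vec a) (fun=> 1)).
by rewrite qform_unit_vec1 qform_unit_vec qform11.
Qed.

Lemma psd_scale Y (c : R) : 0 <= c -> psd Y -> psd (fun a b => Y a b * c).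
Proof.
move=> c_ge0 /psdE [Ysym Ypsd]; apply/psdE; split=> [a b|x]; first by rewrite Ysym.
have -> : qform (fun a b => Y a b * c) x x = qform Y x x * c.
  rewrite /qform mulr_suml; apply: eq_bigr => a _.
  by rewrite mulr_suml; apply: eq_bigr => b _; ring.
exact: mulr_ge0.
Qed.

Lemma psd_scale_diag Y (d : T -> R) : psd Y -> psd (fun a b => d a * d b * Y a b).
Proof.
move=> /psdE [Ysym Ypsd]; apply/psdE; split=> [a b|x].
  by rewrite Ysym (mulrC (d a)).
have -> : qform (fun a b => d a * d b * Y a b) x x =
          qform Y (fun a => x a * d a) (fun a => x a * d a).
  by apply: eq_bigr => a _; apply: eq_bigr => b _; ring.
exact: Ypsd.
Qed.

Lemma psd_outer x : psd (fun a b => x a * x b).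
Proof.
apply/psdE; split=> [a b|y]; first exact: mulrC.
have -> : qform (fun a b => x a * x b) y y = (\sum_a y a * x a) ^+ 2.
  rewrite /qform expr2 mulr_suml; apply: eq_bigr => a _; rewrite mulr_sumr.
  by apply: eq_bigr => b _; ring.
exact: sqr_ge0.
Qed.

Lemma trace_le_sumJ Y : nonneg Y -> trace Y <= sumJ Y.
Proof.
move=> Y_ge0; apply: ler_sum => a _.
by rewrite (bigD1 a) //= lerDl sumr_ge0.
Qed.

Lemma sumJ_le_card Y : trace Y = 1 -> psd Y -> nonneg Y -> sumJ Y <= #|T|%:R ^+ 2.
Proof.
move=> Y_tr Ypsd Y_ge0.
have diag_le1 a : Y a a <= 1.
  by rewrite -Y_tr /trace (bigD1 a) //= lerDl sumr_ge0.
have entry_le1 a b : Y a b <= 1.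
  have := psd_entry_sqr _ a b Ypsd; have := diag_le1 a; have := diag_le1 b.
  have := Y_ge0 a a; have := Y_ge0 b b; have := Y_ge0 a b; nra.
rewrite expr2 -[X in X * _]sumr_const -[X in _ * X]sumr_const mulr_suml.
apply: ler_sum => a _; rewrite mulr_sumr; apply: ler_sum => b _.
by rewrite mul1r entry_le1.
Qed.

End QuadraticForm.

Section Bordering.
Context {R : realType} {T : finType}.
Implicit Types (Y X : T -> T -> R) (x : T -> R).

Definition oextend (x0 : R) x : option T -> R :=
  fun o => if o is Some a then x a else x0.

Lemma qform_option (M : option T -> option T -> R) (y z : option T -> R) :
  qform M y z = y None * M None None * z None
    + \sum_b y None * M None (Some b) * z (Some b)
    + \sum_a y (Some a) * M (Some a) None * z None
    + qform (fun a b => M (Some a) (Some b)) (y \o Some) (z \o Some).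
Proof.
rewrite /qform sum_option sum_option -!addrA; congr (_ + _).
by rewrite (eq_bigr _ (fun a _ => sum_option _)) big_split /= addrA.
Qed.

Lemma qform_border X (x0 : R) x :
  qform (border X) (oextend x0 x) (oextend x0 x) =
  x0 ^+ 2 + 2 * x0 * \sum_a x a * X a a + qform X x x.
Proof.
rewrite qform_option /= mulr1 -expr2 -!addrA; congr (_ + _).
rewrite !addrA; congr (_ + _).
by rewrite -big_split mulr_sumr; apply: eq_bigr => a _ /=; ring.
Qed.

Lemma psd_border_sub X : psd (border X) -> psd X.
Proof.
move=> /psdE [Xsym Xpsd]; apply/psdE; split=> [a b|x].
  exact: (Xsym (Some a) (Some b)).
by have := Xpsd (oextend 0 x); rewrite qform_border expr0n mulr0 !mul0r !add0r.
Qed.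

Lemma sqr_trace_le_sumJ X : psd (border X) -> trace X ^+ 2 <= sumJ X.
Proof.
move=> /psdE [_ /(_ (oextend (- trace X) (fun=> 1)))].
rewrite qform_border qform11 (eq_bigr _ (fun a _ => mul1r (X a a))) -/(trace X).
lra.
Qed.

(* The Gram matrix B^T Y B for the columns B = [1 | I]. *)
Definition bordered_sums Y : option T -> option T -> R :=
  fun o o' => match o, o' with
              | None, None => sumJ Y
              | None, Some b => \sum_c Y c b
              | Some a, None => \sum_d Y a d
              | Some a, Some b => Y a b
              end.

Lemma psd_bordered_sums Y : psd Y -> psd (bordered_sums Y).
Proof.
move=> /psdE [Ysym Ypsd]; apply/psdE; split.
  move=> [a|] [b|] //=; apply: eq_bigr => c _; exact: Ysym.
move=> y; have := Ypsd (fun a => y (Some a) + y None * 1).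
rewrite qformDl !qformDr qform11 qform_option /=; congr (0 <= _).
have -> : \sum_a y (Some a) * (\sum_d Y a d) * y None =
          y None * qform Y (y \o Some) (fun=> 1).
  rewrite /qform mulr_sumr; apply: eq_bigr => a _.
  by rewrite mulrAC !mulr_sumr; apply: eq_bigr => b _ /=; ring.
have -> : \sum_b y None * (\sum_c Y c b) * y (Some b) =
          y None * qform Y (fun=> 1) (y \o Some).
  rewrite /qform exchange_big mulr_sumr; apply: eq_bigr => b _.
  by rewrite mulrAC !mulr_sumr; apply: eq_bigr => c _ /=; ring.
rewrite /=; ring.
Qed.

End Bordering.

Section Transfer.
Context {R : realType} {T : finType}.
Implicit Types (Y X : T -> T -> R).

Definition row_ratio Y (a : T) : R := (\sum_b Y a b) / Y a a.

Definition schrijver_to_theta2 Y : T -> T -> R :=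
  fun a b => row_ratio Y a * row_ratio Y b * Y a b / sumJ Y.

Definition theta2_to_schrijver X : T -> T -> R := fun a b => X a b / trace X.

Lemma sumJ_ge0 Y : nonneg Y -> 0 <= sumJ Y.
Proof. by move=> Y_ge0; do 2![apply: sumr_ge0 => ? _]. Qed.

Lemma nonneg_schrijver_to_theta2 Y : nonneg Y -> nonneg (schrijver_to_theta2 Y).
Proof.
move=> Y_ge0 a b; have ratio_ge0 c : 0 <= row_ratio Y c.
  by rewrite divr_ge0 ?sumr_ge0.
rewrite divr_ge0 ?sumJ_ge0 //.
by apply: mulr_ge0; [exact: mulr_ge0 | exact: Y_ge0].
Qed.

Lemma row_ratio_sum Y a : row_ratio Y a * \sum_b Y a b = row_ratio Y a ^+ 2 * Y a a.
Proof. by rewrite sqr_divr_mul /row_ratio mulrC mulrA -expr2. Qed.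

Lemma border_schrijver_to_theta2 Y : symm Y -> sumJ Y != 0 ->
  border (schrijver_to_theta2 Y) =
  (fun o o' => oextend 1 (row_ratio Y) o * oextend 1 (row_ratio Y) o' *
               bordered_sums Y o o' / sumJ Y).
Proof.
move=> Ysym v_neq0; apply: funext => -[a|]; apply: funext => -[b|] //=.
- by rewrite mulr1 row_ratio_sum.
- rewrite mul1r (eq_bigr _ (fun c _ => Ysym c b)) row_ratio_sum.
  by rewrite /schrijver_to_theta2 -expr2.
- by rewrite !mul1r divff.
Qed.

Lemma psd_border_schrijver_to_theta2 Y : psd Y -> 0 < sumJ Y ->
  psd (border (schrijver_to_theta2 Y)).
Proof.
move=> Ypsd v_gt0; rewrite border_schrijver_to_theta2 ?lt0r_neq0 //; last exact: Ypsd.1.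
by apply: psd_scale; [rewrite invr_ge0 ltW | apply/psd_scale_diag/psd_bordered_sums].
Qed.

Lemma sumJ_le_trace_schrijver_to_theta2 Y : trace Y = 1 -> psd Y -> nonneg Y ->
  sumJ Y <= trace (schrijver_to_theta2 Y).
Proof.
move=> Y_tr Ypsd Y_ge0; set v := sumJ Y.
have v_gt0 : 0 < v by have := trace_le_sumJ Y Y_ge0; rewrite Y_tr -/v; lra.
have tangent a :
    2 * v * (\sum_b Y a b) - v ^+ 2 * Y a a <= row_ratio Y a * row_ratio Y a * Y a a.
  by rewrite -expr2 sqr_divr_mul tangent_le_sqr_div ?psd_row_sum_sqr.
have : \sum_a (2 * v * \sum_b Y a b - v ^+ 2 * Y a a) <=
       \sum_a row_ratio Y a * row_ratio Y a * Y a a.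
  by apply: ler_sum => a _; exact: tangent.
rewrite sumrB -!mulr_sumr -/(trace Y) -/(sumJ Y) Y_tr -/v mulr1.
rewrite /trace /schrijver_to_theta2 -mulr_suml ler_pdivlMr // -/v.
nra.
Qed.

Lemma trace_theta2_to_schrijver X : trace X != 0 -> trace (theta2_to_schrijver X) = 1.
Proof. by move=> t_neq0; rewrite /trace -mulr_suml divff. Qed.

Lemma psd_theta2_to_schrijver X : 0 <= trace X -> psd X -> psd (theta2_to_schrijver X).
Proof. by move=> t_ge0; apply: psd_scale; rewrite invr_ge0. Qed.

Lemma nonneg_theta2_to_schrijver X : 0 <= trace X -> nonneg X ->
  nonneg (theta2_to_schrijver X).
Proof. by move=> t_ge0 X_ge0 a b; rewrite divr_ge0. Qed.

Lemma trace_le_sumJ_theta2_to_schrijver X : psd (border X) -> 0 < trace X ->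
  trace X <= sumJ (theta2_to_schrijver X).
Proof.
move=> Xpsd t_gt0.
have -> : sumJ (theta2_to_schrijver X) = sumJ X / trace X.
  by rewrite /sumJ mulr_suml; apply: eq_bigr => a _; rewrite mulr_suml.
by rewrite ler_pdivlMr // -expr2 sqr_trace_le_sumJ.
Qed.

End Transfer.

Lemma sup_eq_of_down (R : realType) (A B : set R) :
  has_ubound B -> B 0 -> (forall v, A v -> 0 <= v) ->
  A `<=` down B -> (forall w, B w -> w <= 0 \/ down A w) -> sup A = sup B.
Proof.
move=> [N ubN] B0 A_ge0 AB BA.
have hsB : has_sup B by split; [exists 0 | exists N].
have [[v0 Av0] | A_empty] := pselect (A !=set0).
  have hsA : has_sup A.
    split; first by exists v0.
    by exists N => v /AB [w [Bw vw]]; apply: le_trans vw (ubN _ Bw).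
  apply/le_anti/andP; split; apply: sup_le => //; first by exists v0.
    move=> w /BA [w_le0|//]; exists v0; split=> //.
    exact: le_trans w_le0 (A_ge0 _ Av0).
  by exists 0.
have -> : A = set0 by apply/seteqP; split=> // v Av; apply: A_empty; exists v.
rewrite sup0; apply/le_anti/andP; split; first exact: (sup_upper_bound hsB).
apply: ge_sup; first by exists 0.
by move=> w /BA [//|[v [Av _]]]; case: A_empty; exists v.
Qed.

Section Values.
Context {R : realType}.

Definition schrijver_values {T : finType} (h : rel T) : set R :=
  [set v : R | exists Y : T -> T -> R,
        symm Y /\ (forall a b, h a b -> Y a b = 0) /\ trace Y = 1 /\
        psd Y /\ nonneg Y /\ v = sumJ Y].

Definition theta2_values (k n : nat) (e : rel 'I_n) : set R :=
  [set v : R | exists Y : 'I_k * 'I_n -> 'I_k * 'I_n -> R,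
        symm Y /\
        (forall (r : 'I_k) (i j : 'I_n), e i j -> Y (r, i) (r, j) = 0) /\
        (forall (i : 'I_n) (r l : 'I_k), r != l -> Y (r, i) (l, i) = 0) /\
        nonneg Y /\ psd (border Y) /\
        v = \sum_(r : 'I_k) \sum_(i : 'I_n) Y (r, i) (r, i)].

Lemma schrijver_values_ge1 (T : finType) (h : rel T) v : schrijver_values h v -> 1 <= v.
Proof. by move=> [Y [_ [_ [<- [_ [Y_ge0 ->]]]]]]; apply: trace_le_sumJ. Qed.

Lemma schrijver_values_le_card (T : finType) (h : rel T) v :
  schrijver_values h v -> v <= #|T|%:R ^+ 2.
Proof. by move=> [Y [_ [_ [Y_tr [Ypsd [Y_ge0 ->]]]]]]; apply: sumJ_le_card. Qed.

Lemma trace_pair (I J : finType) (Y : I * J -> I * J -> R) :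
  \sum_(r : I) \sum_(i : J) Y (r, i) (r, i) = trace Y.
Proof. by rewrite /trace pair_big; apply: eq_bigr => -[]. Qed.

Context {k n : nat} {e : rel 'I_n}.

Lemma theta2_values0 : theta2_values k n e 0.
Proof.
exists (fun _ _ => 0); do 5!split=> //; last by rewrite big1 // => r _; rewrite big1.
rewrite (_ : border _ = fun o o' => oextend 1 (fun=> 0) o * oextend 1 (fun=> 0) o').
  exact: psd_outer.
by apply: funext => -[a|]; apply: funext => -[b|] /=; rewrite ?mulr0 ?mul0r ?mulr1.
Qed.

Lemma schrijver_values_sub_down :
  schrijver_values (@cart_Kk k n e) `<=` down (theta2_values k n e).
Proof.
move=> _ [Y [Ysym [Y_edge [Y_tr [Ypsd [Y_ge0 ->]]]]]].
have v_gt0 : 0 < sumJ Y by have := trace_le_sumJ Y Y_ge0; rewrite Y_tr; lra.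
set X := schrijver_to_theta2 Y.
have X_edge a b : cart_Kk e a b -> X a b = 0.
  by move/Y_edge; rewrite /X /schrijver_to_theta2 => ->; rewrite mulr0 mul0r.
exists (trace X); split; last exact: sumJ_le_trace_schrijver_to_theta2.
have Xbpsd := psd_border_schrijver_to_theta2 Y Ypsd v_gt0.
exists X; split; first exact: (psd_border_sub _ Xbpsd).1.
split; first by move=> r i j eij; apply: X_edge; rewrite /cart_Kk /= eqxx eij.
split; first by move=> i r l rl; apply: X_edge; rewrite /cart_Kk /= eqxx rl orbT.
split; first exact: nonneg_schrijver_to_theta2.
by split; last rewrite trace_pair.
Qed.

Lemma theta2_values_le_schrijver w :
  theta2_values k n e w -> w <= 0 \/ down (schrijver_values (@cart_Kk k n e)) w.
Proof.
move=> [X [_ [X_row [X_col [X_ge0 [Xbpsd ->]]]]]]; rewrite trace_pair.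
have [t_le0|t_gt0] := lerP (trace X) 0; [by left | right].
have Xpsd := psd_border_sub _ Xbpsd.
have Ypsd := psd_theta2_to_schrijver _ (ltW t_gt0) Xpsd.
exists (sumJ (theta2_to_schrijver X)).
split; last exact: trace_le_sumJ_theta2_to_schrijver.
exists (theta2_to_schrijver X); split; first exact: Ypsd.1.
split.
  move=> [r i] [l j]; rewrite /cart_Kk /theta2_to_schrijver /=.
  by case/orP=> [/andP[/eqP <- /X_row ->] | /andP[/eqP <- /X_col ->]]; rewrite mul0r.
split; first by rewrite trace_theta2_to_schrijver ?lt0r_neq0.
by do 2!split=> //; apply: nonneg_theta2_to_schrijver; rewrite ?ltW.
Qed.

Lemma has_ubound_theta2_values : has_ubound (theta2_values k n e).
Proof.
exists (#|{: 'I_k * 'I_n}|%:R ^+ 2) => w /theta2_values_le_schrijver [w_le0|[v [Sv wv]]].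
  exact: le_trans w_le0 (sqr_ge0 _).
exact: le_trans wv (schrijver_values_le_card _ _ _ Sv).
Qed.

Lemma theta2_values_colorable (S : {set 'I_n}) :
  k_colorable_set k e S -> theta2_values k n e #|S|%:R.
Proof.
move=> [c c_proper].
pose x (p : 'I_k * 'I_n) : R := ((p.2 \in S) && (c p.2 == p.1))%:R.
have xx p : x p * x p = x p by rewrite /x; case: (_ && _); rewrite ?mulr1 ?mulr0.
exists (fun p q => x p * x q); split; first by move=> p q; exact: mulrC.
split.
  move=> r i j eij; rewrite /x /=.
  have [Si|] := boolP (i \in S); last by rewrite mul0r.
  have [Sj|] := boolP (j \in S); last by rewrite mulr0.
  have [ci|] := eqP; last by rewrite mul0r.
  have [cj|] := eqP; last by rewrite mulr0.
  by have := c_proper i j Si Sj eij; rewrite ci cj eqxx.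
split.
  move=> i r l rl; rewrite /x /=; case: (_ \in _); rewrite ?mul0r //=.
  by move: rl; case: (c i =P r) => [<- /negbTE ->|_ _]; rewrite ?mulr0 ?mul0r.
split; first by move=> p q; rewrite mulr_ge0 ?ler0n.
split.
  rewrite (_ : border _ = fun o o' => oextend 1 x o * oextend 1 x o').
    exact: psd_outer.
  by apply: funext => -[p|]; apply: funext => -[q|] //=; rewrite ?xx ?mulr1 ?mul1r.
under eq_bigr do under eq_bigr do rewrite xx.
rewrite exchange_big /= -sum1_card natr_sum big_mkcond /=; apply: eq_bigr => i _.
rewrite /x /=; case: (i \in S) => /=; last by rewrite big1.
by rewrite (bigD1 (c i)) //= eqxx big1 ?addr0 // => r; rewrite eq_sym => /negbTE ->.
Qed.

End Values.

Theorem lemma4 (R : realType) (n k : nat) (e : rel 'I_n) :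
  simple_graph e -> (1 <= k)%N ->
  @schrijver R _ (@cart_Kk k n e) = @theta2 R k n e /\
  ((@alpha_k k n e)%:R <= @theta2 R k n e).
Proof.
move=> _ _; split.
  apply: sup_eq_of_down.
  - exact: has_ubound_theta2_values.
  - exact: theta2_values0.
  - by move=> v /schrijver_values_ge1; apply: le_trans.
  - exact: schrijver_values_sub_down.
  - exact: theta2_values_le_schrijver.
have theta2_ub (w : R) : theta2_values k n e w -> w <= theta2 k e.
  apply: sup_upper_bound; split; last exact: has_ubound_theta2_values.
  by exists 0; exact: theta2_values0.
apply: (big_ind (fun m : nat => m%:R <= theta2 k e)).
- exact: theta2_ub _ theta2_values0.
- by move=> a b; case: leqP.
- by move=> S /asboolP S_col; apply/theta2_ub/theta2_values_colorable.
Qed.
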